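(* Every admissible sequence $i_n\cdots i_1$ with $i_1=1$ is equivalent to a sequence of one of the following seven types: 1. $(213)^m(21)^n$; 2. $3(213)^m(21)^n$; 3. $13(213)^m(21)^n$; 4. $(312)^m(31)^n$; 5. $2(312)^m(31)^n$; 6. $12(312)^m(31)^n$; 7. $1(21)^n$ (which is equivalent to $1(31)^n$). Here $m\ge0$ and $n\ge1$ in types 1–6, and $n\ge0$ in type 7. Moreover, this list is closed under prepending: if $\alpha$ is of one of these types and $i\in\{1,2,3\}$ differs from the first (leftmost) index of $\alpha$, then $i\alpha$ is equivalent to a sequence of one of these types.
   Context: A finite sequence $s=i_n i_{n-1}\cdots i_1$ with $i_p\in\{1,2,3\}$ (written as a word read from left to right, with $i_1$ the rightmost letter) is called admissible if adjacent indices are distinct ($i_p\neq i_{p+1}$). Admissible sequences are considered up to the equivalence relation generated by replacing any consecutive subword $iji$ by $iki$, where $\{i,j,k\}=\{1,2,3\}$. Powers denote repeated concatenation, e.g. $(21)^2=2121$ and $(213)^0$ is empty. *)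

From mathcomp Require Import all_boot.
From Stdlib Require Import Relations.
Set Implicit Arguments. Unset Strict Implicit. Unset Printing Implicit Defensive.

(* A sequence i_n ... i_1 is represented as the list [:: i_n; ...; i_1]
   (leftmost letter first); letters are natural numbers 1, 2, 3. *)

Definition letter (i : nat) : bool := (i == 1) || (i == 2) || (i == 3).

Definition admissible (s : seq nat) : Prop :=
  all letter s /\ sorted (fun a b => a != b) s.

Definition triple (i j k : nat) : Prop :=
  [/\ letter i, letter j, letter k & [&& i != j, j != k & i != k]].

Definition move (s t : seq nat) : Prop :=
  exists (a b : seq nat) (i j k : nat),
    triple i j k /\ s = a ++ [:: i; j; i] ++ b /\ t = a ++ [:: i; k; i] ++ b.

Definition seq_equiv (s t : seq nat) : Prop := clos_refl_sym_trans (seq nat) move s t.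

Definition wpow (w : seq nat) (n : nat) : seq nat := flatten (nseq n w).

Definition of_type (t : seq nat) : Prop :=
  (exists m n, 1 <= n /\
     (t = wpow [:: 2; 1; 3] m ++ wpow [:: 2; 1] n \/
      t = 3 :: wpow [:: 2; 1; 3] m ++ wpow [:: 2; 1] n \/
      t = 1 :: 3 :: wpow [:: 2; 1; 3] m ++ wpow [:: 2; 1] n \/
      t = wpow [:: 3; 1; 2] m ++ wpow [:: 3; 1] n \/
      t = 2 :: wpow [:: 3; 1; 2] m ++ wpow [:: 3; 1] n \/
      t = 1 :: 2 :: wpow [:: 3; 1; 2] m ++ wpow [:: 3; 1] n))
  \/ (exists n, t = 1 :: wpow [:: 2; 1] n).
Example ex_move : seq_equiv [:: 1; 2; 1] [:: 1; 3; 1].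
Proof. apply rst_step. exists [::], [::], 1, 2, 3. split; [split; done | done]. Qed.

(* Fix {y, z} = {2, 3} and let B(m, n) = (y1z)^m (y1)^n, so that types 1-3
   (y = 2) and 4-6 (y = 3) read B(m, n), zB(m, n) and 1zB(m, n).  The moves
   y1y1zy -> y1z1zy -> y1zyzy -> y1zy1y give y1 B(m, n+1) ~ B(m, n+2): a pair
   y1 slides through all the blocks.  Prepending a letter to one of these
   words therefore yields a word of the same shape, possibly after one or two
   moves followed by this sliding, except that 1B(0, n) is type 7; and
   1(31)^n ~ 1(21)^n letter by letter.  The first claim follows from the
   second by induction on the length, as moves preserve the first letter. *)
From Stdlib Require Import Relations.
From mathcomp Require Import all_boot.

Set Implicit Arguments.
Unset Strict Implicit.
Unset Printing Implicit Defensive.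

Lemma triple_rot i j k : triple i j k -> triple j k i.
Proof.
by case=> ? ? ? /and3P[ij jk ik]; split; rewrite // jk (eq_sym k) ik (eq_sym j) ij.
Qed.

Lemma triple_letter y z i : triple 1 y z -> letter i -> [\/ i = 1, i = y | i = z].
Proof.
rewrite /triple /letter => -[_ + + +].
move=> /orP[/orP[]|] /eqP-> /orP[/orP[]|] /eqP-> // _ /orP[/orP[]|] /eqP->.
all: by [apply: Or31 | apply: Or32 | apply: Or33].
Qed.

Lemma seq_equiv_move a b i j k : triple i j k ->
  seq_equiv (a ++ i :: j :: i :: b) (a ++ i :: k :: i :: b).
Proof. by move=> Hijk; apply: rst_step; exists a, b, i, j, k. Qed.

Lemma seq_equiv_trans s u t : seq_equiv s u -> seq_equiv u t -> seq_equiv s t.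
Proof. exact: rst_trans. Qed.

Arguments seq_equiv_trans {s u t}.

Lemma seq_equiv_catl a s t : seq_equiv s t -> seq_equiv (a ++ s) (a ++ t).
Proof.
elim=> {s t} [s t [a' [b [i [j [k [Hijk [-> ->]]]]]]] | s | s t _ IH
             | s u t _ IH1 _ IH2].
- by apply: rst_step; exists (a ++ a'), b, i, j, k; rewrite !catA.
- exact: rst_refl.
- exact: rst_sym.
- exact: rst_trans IH2.
Qed.

Lemma seq_equiv_head s t : seq_equiv s t -> head 0 s = head 0 t.
Proof.
elim=> {s t} [s t [a [b [i [j [k [_ [-> ->]]]]]]] | s | s t _ IH
             | s u t _ IH1 _ IH2] //.
- by case: a.
- by rewrite IH1.
Qed.

Lemma tail_swap y z n : triple 1 y z ->
  seq_equiv (1 :: wpow [:: y; 1] n) (1 :: wpow [:: z; 1] n).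
Proof.
move=> Hyz; elim: n => [|n IH]; first exact: rst_refl.
apply: seq_equiv_trans (seq_equiv_move [::] _ Hyz) _.
exact: (seq_equiv_catl [:: 1; z] IH).
Qed.

Definition blocks (y z : nat) (m n : nat) : seq nat :=
  wpow [:: y; 1; z] m ++ wpow [:: y; 1] n.

Definition block_type (y z : nat) (t : seq nat) : Prop :=
  exists m n, 1 <= n /\
    [\/ t = blocks y z m n, t = z :: blocks y z m n | t = 1 :: z :: blocks y z m n].

Definition tail_type (y : nat) (t : seq nat) : Prop :=
  exists n, t = 1 :: wpow [:: y; 1] n.

Section Blocks.

Variables y z : nat.
Hypothesis Hyz : triple 1 y z.

Let Hzy : triple z 1 y := triple_rot (triple_rot Hyz).
Let Hy1 : triple y z 1 := triple_rot Hyz.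

Lemma blocks_head m n : exists w, blocks y z m n.+1 = y :: w.
Proof. by case: m; eexists. Qed.

Lemma cons_y1_blocks m n :
  seq_equiv (y :: 1 :: blocks y z m n.+1) (blocks y z m n.+2).
Proof.
elim: m => [|m IH]; first exact: rst_refl.
have [w Ew] := blocks_head m n.
have slide : seq_equiv (y :: 1 :: y :: 1 :: z :: y :: w)
                       (y :: 1 :: z :: y :: 1 :: y :: w).
  apply: seq_equiv_trans (seq_equiv_move [:: y] _ Hyz) _.
  apply: seq_equiv_trans (seq_equiv_move [:: y; 1] _ Hzy) _.
  exact: (seq_equiv_move [:: y; 1; z] _ Hy1).
rewrite /blocks /= -/(wpow _ m) -/(blocks y z m n.+1) Ew.
apply: seq_equiv_trans slide _.
rewrite -Ew.
exact: (seq_equiv_catl [:: y; 1; z] IH).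
Qed.

Lemma cons_yz_blocks m n :
  seq_equiv (y :: z :: blocks y z m n.+1) (blocks y z m n.+2).
Proof.
have [w Ew] := blocks_head m n.
rewrite Ew; apply: seq_equiv_trans (seq_equiv_move [::] _ Hy1) _.
by rewrite -Ew; apply: cons_y1_blocks.
Qed.

Lemma cons_z1z_blocks m n :
  seq_equiv (z :: 1 :: z :: blocks y z m n.+1) (z :: blocks y z m n.+2).
Proof.
apply: seq_equiv_trans (seq_equiv_move [::] _ Hzy) _.
exact: (seq_equiv_catl [:: z] (cons_yz_blocks m n)).
Qed.

Lemma cons_1y1z_blocks m n :
  seq_equiv (1 :: y :: 1 :: z :: blocks y z m n.+1) (1 :: z :: blocks y z m n.+2).
Proof.
apply: seq_equiv_trans (seq_equiv_move [::] _ Hyz) _.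
exact: (seq_equiv_catl [:: 1] (cons_z1z_blocks m n)).
Qed.

Lemma block_type_cons alpha i : block_type y z alpha -> letter i ->
  i != head 0 alpha ->
  exists t, (block_type y z t \/ tail_type y t) /\ seq_equiv (i :: alpha) t.
Proof.
move=> [m [[|n] [// _ Halpha]]] /(triple_letter Hyz) Hi.
have [w Ew] := blocks_head m n.
case: Halpha => ->; case: Hi => -> //=; rewrite ?Ew ?eqxx // => _; rewrite -?Ew.
- case: m Ew => [|m] Ew.
    exists (1 :: wpow [:: y; 1] n.+1); split; last exact: rst_refl.
    by right; exists n.+1.
  exists (1 :: z :: blocks y z m n.+2); split; last exact: cons_1y1z_blocks.
  by left; exists m, n.+2; split=> //; apply: Or33.
- exists (z :: blocks y z m n.+1); split; last exact: rst_refl.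
  by left; exists m, n.+1; split=> //; apply: Or32.
- exists (1 :: z :: blocks y z m n.+1); split; last exact: rst_refl.
  by left; exists m, n.+1; split=> //; apply: Or33.
- exists (blocks y z m n.+2); split; last exact: cons_yz_blocks.
  by left; exists m, n.+2; split=> //; apply: Or31.
- exists (blocks y z m.+1 n.+1); split; last exact: rst_refl.
  by left; exists m.+1, n.+1; split=> //; apply: Or31.
- exists (z :: blocks y z m n.+2); split; last exact: cons_z1z_blocks.
  by left; exists m, n.+2; split=> //; apply: Or32.
Qed.

Lemma tail_type_cons alpha i : tail_type y alpha -> letter i -> i != 1 ->
  exists t, (block_type y z t \/ block_type z y t) /\ seq_equiv (i :: alpha) t.
Proof.
move=> [n ->] /(triple_letter Hyz) [-> // | -> _ | -> _].
- exists (blocks y z 0 n.+1); split; last exact: rst_refl.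
  by left; exists 0, n.+1; split=> //; apply: Or31.
- exists (blocks z y 0 n.+1); split.
    by right; exists 0, n.+1; split=> //; apply: Or31.
  exact: (seq_equiv_catl [:: z] (tail_swap n Hyz)).
Qed.

End Blocks.

Definition reduces (s : seq nat) : Prop := exists t, of_type t /\ seq_equiv s t.

Lemma reduces_equiv s u : seq_equiv s u -> reduces u -> reduces s.
Proof.
by move=> Esu [t [Ht Eut]]; exists t; split=> //; apply: seq_equiv_trans Esu Eut.
Qed.

Lemma of_type_reduces t : of_type t -> reduces t.
Proof. by move=> Ht; exists t; split=> //; apply: rst_refl. Qed.

Lemma of_typeE t :
  of_type t <-> [\/ block_type 2 3 t, block_type 3 2 t | tail_type 2 t].
Proof.
split=> [[[m [n [Hn Ht]]] | Htail] | ]; [ | exact: Or33 | ].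
- case: Ht => [|[|[|[|[|]]]]] ->;
    [apply: Or31 | apply: Or31 | apply: Or31 | apply: Or32 | apply: Or32 | apply: Or32];
    exists m, n; split=> //; by [apply: Or31 | apply: Or32 | apply: Or33].
- case=> [[m [n [Hn [] ->]]] | [m [n [Hn [] ->]]] | Htail]; last by right.
  all: by left; exists m, n; split=> //; tauto.
Qed.

Lemma of_type_cons alpha i : of_type alpha -> letter i -> i != head 0 alpha ->
  reduces (i :: alpha).
Proof.
have T23 : triple 1 2 3 by [].
have T32 : triple 1 3 2 by [].
move=> /of_typeE [] Halpha Hi Hh.
- have [t [[Ht|Ht] E]] := block_type_cons T23 Halpha Hi Hh;
    apply: reduces_equiv E _; apply: of_type_reduces; apply/of_typeE.
    exact: Or31.
  exact: Or33.
- have [t [[Ht|[n ->]] E]] := block_type_cons T32 Halpha Hi Hh;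
    apply: reduces_equiv E _.
    by apply: of_type_reduces; apply/of_typeE; apply: Or32.
  apply: reduces_equiv (tail_swap n T32) _.
  by apply: of_type_reduces; right; exists n.
- have Hi1 : i != 1 by case: Halpha Hh => n ->.
  have [t [Ht E]] := tail_type_cons T23 Halpha Hi Hi1.
  apply: reduces_equiv E _; apply: of_type_reduces; apply/of_typeE.
  by case: Ht => Ht; [apply: Or31 | apply: Or32].
Qed.

Lemma reduces_cons x s : letter x -> x != head 0 s -> reduces s -> reduces (x :: s).
Proof.
move=> Hx Hxs [t [Ht E]]; apply: reduces_equiv (seq_equiv_catl [:: x] E) _.
by apply: of_type_cons; rewrite // -(seq_equiv_head E).
Qed.

Lemma admissible_reduces s : admissible s -> last 0 s = 1 -> reduces s.
Proof.
elim: s => [|x s IH] //; case: s IH => [|y s] IH [Hl Hs] Hlast.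
  by rewrite /= in Hlast; subst x; apply: of_type_reduces; right; exists 0.
move: Hl Hs => /= /andP[Hx Hl] /andP[Hxy Hs].
by apply: reduces_cons => //; apply: IH (conj Hl Hs) Hlast.
Qed.

Theorem mainTheorem16 :
  (forall s : seq nat, admissible s -> last 0 s = 1 ->
     exists t, of_type t /\ seq_equiv s t)
  /\
  (forall (alpha : seq nat) (i : nat), of_type alpha -> letter i ->
     i != head 0 alpha ->
     exists t, of_type t /\ seq_equiv (i :: alpha) t).
Proof. split; [exact: admissible_reduces | exact: of_type_cons]. Qed.
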